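(* Let $n\ge3$, let $q\in\mathbb{C}\setminus\{0\}$ not be a root of unity, and put $a=q/(1+q)$, $b=1/(1+q)$. For $i=1,\dots,n-1$ define the $(n-1)\times(n-1)$ matrices \[u_i=(1-\delta_{i,1})\,b\,e_{i,i-1}+e_{ii}+(1-\delta_{i,n-1})\,a\,e_{i,i+1},\] \[v_i=(1-\delta_{i,1})\,b(n-1)\,e_{i,i-1}+(2-n)\,e_{ii}+(1-\delta_{i,n-1})\,a(n-1)\,e_{i,i+1}+E(i).\] Then (a) the Lie algebra generated by $u_1,\dots,u_{n-1}$ is $\mathfrak{gl}_{n-1}(\mathbb{C})$, and (b) the Lie algebra generated by $v_1,\dots,v_{n-1}$ is $\mathfrak{sl}_{n-1}(\mathbb{C})$.
   Context: $e_{ij}$ ($1\le i,j\le n-1$) are the standard matrix units of $(n-1)\times(n-1)$ complex matrices, $E(i)=I_{n-1}-e_{ii}$, and $\delta$ is the Kronecker delta (terms with an index outside $1,\dots,n-1$ are absent). Lie algebras are taken inside $\mathfrak{gl}_{n-1}(\mathbb{C})$ with the commutator bracket. *)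

From HB Require Import structures.
From mathcomp Require Import all_boot all_order all_algebra.
From mathcomp Require Import complex.
From mathcomp Require Import reals.
Set Implicit Arguments. Unset Strict Implicit. Unset Printing Implicit Defensive.
Import Order.TTheory GRing.Theory Num.Theory.
Local Open Scope ring_scope.

Definition lie_subalg (C : comNzRingType) (m : nat) (S : 'M[C]_m -> Prop) : Prop :=
  [/\ S 0,
      (forall (c : C) x y, S x -> S y -> S (c *: x + y)) &
      (forall x y, S x -> S y -> S (x *m y - y *m x))].

Definition lie_gen (C : comNzRingType) (m : nat) (G : 'M[C]_m -> Prop) : 'M[C]_m -> Prop :=
  fun x => forall S : 'M[C]_m -> Prop,
    lie_subalg S -> (forall g, G g -> S g) -> S x.

(* Indices: the paper's index i in {1,...,n-1} is the ordinal i-1 : 'I_(n-1).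
   e_{i,i-1} and e_{i,i+1} are absent when the column index is out of range. *)
Definition a_coef (C : fieldType) (q : C) : C := q / (1 + q).
Definition b_coef (C : fieldType) (q : C) : C := 1 / (1 + q).

Definition u_mx (C : fieldType) (n : nat) (q : C) (i : 'I_(n.-1)) : 'M[C]_(n.-1) :=
  \matrix_(r, c)
    (if r == i then
       (if (c : nat) == i then 1
        else if (c.+1 == i)%N then b_coef q
        else if ((c : nat) == i.+1)%N then a_coef q
        else 0)
     else 0).

(* v_i = b(n-1) e_{i,i-1} + (2-n) e_{ii} + a(n-1) e_{i,i+1} + E(i),
   E(i) = I - e_{ii} *)
Definition v_mx (C : fieldType) (n : nat) (q : C) (i : 'I_(n.-1)) : 'M[C]_(n.-1) :=
  \matrix_(r, c)
    (if r == i then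
       (if (c : nat) == i then 2 - n%:R
        else if (c.+1 == i)%N then b_coef q * (n%:R - 1)
        else if ((c : nat) == i.+1)%N then a_coef q * (n%:R - 1)
        else 0)
     else 0)
  + (1%:M - delta_mx i i).

From HB Require Import structures.
From mathcomp Require Import all_boot all_order all_algebra.
From mathcomp Require Import complex.
From mathcomp Require Import reals.
From mathcomp Require Import ring zify.
Set Implicit Arguments. Unset Strict Implicit. Unset Printing Implicit Defensive.
Import Order.TTheory GRing.Theory Num.Theory.
Local Open Scope ring_scope.

(* Write u_i = e_ii W and v_i = (1 - n) e_ii W' + 1, where W and W' are the
   tridiagonal matrices with unit diagonal and off-diagonals (b, a) and
   (-b, -a). If W has unit diagonal and nonzero off-diagonal entries, a double
   bracket with the idempotent e_kk W moves the column index of e_ij W to a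
   neighbouring k, so the Lie algebra generated by the e_kk W contains every
   e_ij W; these span gl_{n-1} as soon as W is invertible. A kernel vector of
   W satisfies a two-step linear recurrence with characteristic roots -1 and -q
   (resp. 1 and q for W'), so it vanishes because q^{n-1} != 1. For the v_i the
   identity summands drop out of brackets: the affine preimage of a Lie
   subalgebra containing the v_i is a Lie subalgebra containing the e_kk W',
   hence everything, so it contains all commutators, which span sl_{n-1}. *)

Section LieSubalgebra.
Variables (C : comNzRingType) (m : nat) (S : 'M[C]_m -> Prop).
Hypothesis S_lie : lie_subalg S.

Lemma lie_subalg0 : S 0.
Proof. by case: S_lie. Qed.

Lemma lie_subalgD x y : S x -> S y -> S (x + y).
Proof. by case: S_lie => _ SZD _ Sx Sy; rewrite -[x]scale1r; apply: SZD. Qed.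

Lemma lie_subalgZ c x : S x -> S (c *: x).
Proof. by case: S_lie => S0 SZD _ Sx; rewrite -[_ *: _]addr0; apply: SZD. Qed.

Lemma lie_subalgB x y : S x -> S y -> S (x - y).
Proof. by move=> Sx Sy; rewrite -scaleN1r; apply: lie_subalgD => //; apply: lie_subalgZ. Qed.

Lemma lie_subalg_comm x y : S x -> S y -> S (x *m y - y *m x).
Proof. by case: S_lie => _ _; apply. Qed.

Lemma lie_subalg_sum (I : Type) (r : seq I) (P : pred I) (F : I -> 'M_m) :
  (forall i, S (F i)) -> S (\sum_(i <- r | P i) F i).
Proof. by move=> SF; elim/big_ind: _ => //; [exact: lie_subalg0 | exact: lie_subalgD]. Qed.

End LieSubalgebra.

Section DeltaMx.
Variables (C : comNzRingType) (m : nat).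
Implicit Types (A : 'M[C]_m) (i j k l r c : 'I_m).

Lemma delta_mulmxE i j A r c : (delta_mx i j *m A) r c = (r == i)%:R * A j c.
Proof.
rewrite mxE (bigD1 j) //= big1 ?addr0 => [|l /negPf jl]; first by rewrite mxE eqxx andbT.
by rewrite mxE jl andbF mul0r.
Qed.

Lemma mulmx_deltaE A k l r c : (A *m delta_mx k l) r c = A r k * (c == l)%:R.
Proof.
rewrite mxE (bigD1 k) //= big1 ?addr0 => [|t /negPf tk]; first by rewrite mxE eqxx.
by rewrite mxE tk mulr0.
Qed.

Lemma delta_mulmx_delta i j A k l :
  delta_mx i j *m A *m delta_mx k l = A j k *: delta_mx i l.
Proof.
apply/matrixP => r c; rewrite mulmx_deltaE delta_mulmxE !mxE.
by case: (r == i); case: (c == l); rewrite /= ?(mulr0, mul0r, mulr1, mul1r).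
Qed.

Lemma mxtrace_delta_mulmx i j A : \tr (delta_mx i j *m A) = A j i.
Proof.
rewrite /mxtrace (bigD1 i) //= big1 ?addr0 => [|r /negPf ri].
  by rewrite delta_mulmxE eqxx mul1r.
by rewrite delta_mulmxE ri mul0r.
Qed.

End DeltaMx.

Lemma ord_adjacent_ind m (P : 'I_m -> Prop) (i : 'I_m) :
  P i -> (forall j k : 'I_m, k = j.+1 :> nat \/ j = k.+1 :> nat -> P j -> P k) ->
  forall j, P j.
Proof.
move=> Pi Pstep.
have up d (j : 'I_m) : j = (i + d)%N :> nat -> P j.
  elim: d j => [|d IH] j ji; first by rewrite (_ : j = i) //; apply: ord_inj; lia.
  have lt_id : (i + d < m)%N by have := ltn_ord j; lia.
  by apply: (Pstep (Ordinal lt_id)); [left => /=; lia | apply: IH].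
have down d (j : 'I_m) : i = (j + d)%N :> nat -> P j.
  elim: d j => [|d IH] j ij; first by rewrite (_ : j = i) //; apply: ord_inj; lia.
  have lt_j1 : (j.+1 < m)%N by have := ltn_ord i; lia.
  by apply: (Pstep (Ordinal lt_j1)); [right | apply: IH => /=; lia].
by move=> j; case: (leqP i j) => ij; [apply: (up (j - i)%N) | apply: (down (i - j)%N)]; lia.
Qed.

Section UnitsTimesMatrix.
Variables (C : fieldType) (m : nat) (W : 'M[C]_m) (S : 'M[C]_m -> Prop).
Hypotheses (two_neq0 : (2 : C) != 0) (W_diag : forall k, W k k = 1) (S_lie : lie_subalg S).

Let f (i j : 'I_m) := delta_mx i j *m W.

Lemma delta_mulmxM a b c d : f a b *m f c d = W b c *: f a d.
Proof. by rewrite /f mulmxA delta_mulmx_delta -scalemxAl. Qed.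

Lemma lie_subalg_move_col i j k : S (f k k) -> S (f i j) -> W j k != 0 -> S (f i k).
Proof.
move=> Skk Sij Wjk.
have S1 := lie_subalg_comm S_lie Skk Sij.
have S2 := lie_subalg_comm S_lie Skk S1.
(* Bracketing twice with the idempotent [f k k] isolates [f i k] up to a multiple of [f k k]. *)
have -> : f i k = (2 * W j k)^-1 *: ((f k k *m (f k k *m f i j - f i j *m f k k)
      - (f k k *m f i j - f i j *m f k k) *m f k k) - (f k k *m f i j - f i j *m f k k))
    + W k i *: f k k.
  rewrite !mulmxBr !mulmxBl !delta_mulmxM -!scalemxAl -!scalemxAr !delta_mulmxM !W_diag.
  move: (f k j) (f i k) (f k k) => A B D; apply/matrixP => r c; rewrite !mxE.
  field; exact/andP.
exact: (lie_subalgD S_lie (lie_subalgZ S_lie _ (lie_subalgB S_lie S2 S1))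
                     (lie_subalgZ S_lie _ Skk)).
Qed.

Hypothesis W_adj : forall j k : 'I_m, k = j.+1 :> nat -> W j k != 0 /\ W k j != 0.

Lemma lie_subalg_delta_mulmx : (forall k, S (f k k)) -> forall i j, S (f i j).
Proof.
move=> Sdiag i; apply: (ord_adjacent_ind (Sdiag i)) => j k jk Sij.
apply: (lie_subalg_move_col (Sdiag k) Sij).
by case: jk => /W_adj [].
Qed.

Lemma lie_subalg_unit_mulmx : W \in unitmx -> (forall k, S (f k k)) -> forall x, S x.
Proof.
move=> Wu Sdiag x; rewrite -[x](mulmxKV Wu) [x *m _]matrix_sum_delta !mulmx_suml.
apply: lie_subalg_sum => // i; rewrite mulmx_suml; apply: lie_subalg_sum => // j.
by rewrite -scalemxAl; apply: lie_subalgZ => //; apply: lie_subalg_delta_mulmx.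
Qed.

End UnitsTimesMatrix.

Lemma lin_rec2_closed (R : comRingType) (x : nat -> R) (r1 r2 : R) m :
  x 0%N = 0 ->
  (forall k, (k < m)%N -> x k.+2 = (r1 + r2) * x k.+1 - r1 * r2 * x k) ->
  forall k, (k <= m.+1)%N -> x k * (r1 - r2) = (r1 ^+ k - r2 ^+ k) * x 1%N.
Proof.
move=> x0 xrec.
suff closed2 k : (k <= m)%N ->
    x k * (r1 - r2) = (r1 ^+ k - r2 ^+ k) * x 1%N /\
    x k.+1 * (r1 - r2) = (r1 ^+ k.+1 - r2 ^+ k.+1) * x 1%N.
  by case=> [|k] km; [case: (closed2 0%N) | case: (closed2 k)].
elim: k => [|k IH] km; first by rewrite x0 !expr0 !expr1 subrr; split; ring.
have [IHk IHk1] := IH (ltnW km); split=> //.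
rewrite xrec // mulrBl -!mulrA IHk1 IHk !exprS; ring.
Qed.

Section Tridiagonal.
Variable C : fieldType.

Definition tridiag {m} (be al : C) : 'M[C]_m :=
  \matrix_(r, c) (if (c : nat) == r then 1 else if (c.+1 == r)%N then be
                  else if ((c : nat) == r.+1)%N then al else 0).

Lemma tridiagE m be al (r c : 'I_m) :
  tridiag be al r c = (r == c :> nat)%:R + be * (r == c.+1 :> nat)%:R + al * (r.+1 == c :> nat)%:R.
Proof. by rewrite mxE; repeat case: eqP => ?; rewrite ?(mulr0, mulr1, addr0, add0r) //; lia. Qed.

Lemma tridiag_diag m be al (k : 'I_m) : tridiag be al k k = 1.
Proof. by rewrite mxE eqxx. Qed.

Lemma tridiag_adj_neq0 m be al (j k : 'I_m) : be != 0 -> al != 0 -> k = j.+1 :> nat ->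
  tridiag be al j k != 0 /\ tridiag be al k j != 0.
Proof.
move=> be0 al0 kj; rewrite !tridiagE kj !eqxx.
have [-> -> -> ->] : [/\ (j == j.+1 :> nat) = false, (j == j.+2 :> nat) = false,
  (j.+1 == j :> nat) = false & (j.+2 == j :> nat) = false] by split; lia.
by split; rewrite /= ?(mulr0n, mulr1n, mulr0, mulr1, add0r, addr0).
Qed.

Lemma tridiag_unit m be al (r1 r2 : C) :
  be * (r1 + r2) = -1 -> be * (r1 * r2) = al -> r1 ^+ m.+1 != r2 ^+ m.+1 ->
  @tridiag m be al \in unitmx.
Proof.
move=> sum12 prod12 pow12.
have be_neq0 : be != 0.
  by apply/eqP => be0; move/eqP: sum12; rewrite be0 mul0r eq_sym oppr_eq0 oner_eq0.
rewrite -row_free_unit -kermx_eq0; apply/eqP/row_matrixP => i; rewrite row0.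
set v := row i _; have : v *m tridiag be al = 0 by rewrite -row_mul mulmx_ker row0.
move=> /rowP vW.
(* [x] pads the coordinates of [v] with zeros: [x j.+1 = v 0 j] and [x 0 = x m.+1 = 0]. *)
pose x (k : nat) := \sum_(j < m) v 0 j * (j.+1 == k)%:R.
have x_v (j : 'I_m) : x j.+1 = v 0 j.
  rewrite /x (bigD1 j) //= eqxx mulr1 big1 ?addr0 // => l /negPf lj.
  by rewrite eqSS (inj_eq val_inj) lj mulr0.
have x_succ k : \sum_(j < m) v 0 j * (j == k :> nat)%:R = x k.+1.
  by apply: eq_bigr => j _; rewrite eqSS.
have x0 : x 0%N = 0 by rewrite /x big1 // => j _; rewrite mulr0.
have xm1 : x m.+1 = 0 by rewrite /x big1 // => j _; rewrite eqSS ltn_eqF ?mulr0.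
have xrec k : (k < m)%N -> x k.+2 = (r1 + r2) * x k.+1 - r1 * r2 * x k.
  move=> km; have := vW (Ordinal km); rewrite !mxE.
  under eq_bigr => j _ do
    rewrite tridiagE !mulrDr [v 0 j * (be * _)]mulrCA [v 0 j * (al * _)]mulrCA.
  rewrite !big_split /= -!mulr_sumr !x_succ -/(x k) => eq0.
  apply: (mulfI be_neq0); rewrite mulrBr !mulrA -(mulrA be r1 r2) sum12 prod12.
  by rewrite -[RHS]addr0 -eq0; ring.
have closed := lin_rec2_closed x0 xrec.
have x1 : x 1%N = 0.
  apply/eqP; move: (closed m.+1 (leqnn _)); rewrite xm1 mul0r => /esym/eqP.
  by rewrite mulf_eq0 subr_eq0 (negbTE pow12).
have r12 : r1 - r2 != 0 by apply: contra pow12; rewrite subr_eq0 => /eqP ->.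
have x_eq0 k : (k <= m.+1)%N -> x k = 0.
  move=> km; apply/eqP; move: (closed k km); rewrite x1 mulr0 => /eqP.
  by rewrite mulf_eq0 (negbTE r12) orbF.
by apply/rowP => j; rewrite -x_v mxE x_eq0 // leqW.
Qed.

End Tridiagonal.

Lemma lie_subalg_trace0 (C : comNzRingType) m : lie_subalg (fun x : 'M[C]_m => \tr x = 0).
Proof.
split=> [|c x y trx try|x y _ _]; first exact: mxtrace0.
  by rewrite mxtraceD mxtraceZ trx try mulr0 addr0.
by rewrite mxtraceD raddfN /= mxtrace_mulC subrr.
Qed.

Lemma mx_trace0_sum_comm (C : comNzRingType) m (x : 'M[C]_m.+1) : \tr x = 0 ->
  x = \sum_i \sum_j x i j *:
        (delta_mx i (@ord0 m) *m delta_mx ord0 j - delta_mx (@ord0 m) j *m delta_mx i ord0).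
Proof.
(* [e_i0 e_0j - e_0j e_i0 = e_ij - (i == j) e_00]; the corrections add up to [tr x e_00]. *)
move=> trx; under eq_bigr => i _ do under eq_bigr => j _ do
  rewrite mul_delta_mx mul_delta_mx_cond scalerBr.
under eq_bigr => i _ do rewrite sumrB.
rewrite sumrB -matrix_sum_delta.
suff -> : \sum_i \sum_j x i j *: (delta_mx ord0 ord0 *+ (j == i))
          = \tr x *: delta_mx (@ord0 m) (@ord0 m).
  by rewrite trx scale0r subr0.
rewrite /mxtrace scaler_suml; apply: eq_bigr => i _.
rewrite (bigD1 i) //= eqxx mulr1n big1 ?addr0 // => j /negPf ->.
by rewrite mulr0n scaler0.
Qed.

Lemma lie_subalg_contains_trace0 (C : comNzRingType) m (S : 'M[C]_m.+1 -> Prop) :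
  lie_subalg S -> (forall A B, S (A *m B - B *m A)) -> forall x, \tr x = 0 -> S x.
Proof.
move=> S_lie S_comm x /mx_trace0_sum_comm ->.
apply: lie_subalg_sum => // i; apply: lie_subalg_sum => // j.
exact: lie_subalgZ.
Qed.

Lemma comm_scale_shift (C : comNzRingType) m (A B : 'M[C]_m) c t1 t2 :
  (c *: A + t1%:M) *m (c *: B + t2%:M) - (c *: B + t2%:M) *m (c *: A + t1%:M)
  = (c * c) *: (A *m B - B *m A).
Proof.
rewrite !mulmxDl !mulmxDr !mul_mx_scalar !mul_scalar_mx -!scalemxAl -!scalemxAr.
by move: (A *m B) (B *m A) => AB BA; apply/matrixP => r s; rewrite !mxE; ring.
Qed.

Section AffineLieSubalgebra.
Variables (C : fieldType) (m : nat) (S : 'M[C]_m -> Prop) (c : C).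
Hypotheses (S_lie : lie_subalg S) (c_neq0 : c != 0).

Lemma lie_subalg_affine : lie_subalg (fun Y => exists t, S (c *: Y + t%:M)).
Proof.
split=> [|a Y Z [t1 SY] [t2 SZ]|Y Z [t1 SY] [t2 SZ]].
- by exists 0; rewrite scaler0 raddf0 addr0; apply: lie_subalg0.
- exists (a * t1 + t2).
  rewrite [(_ + _)%:M]raddfD /= -scale_scalar_mx scalerDr addrACA.
  rewrite !scalerA [c * a]mulrC -scalerA -scalerDr.
  by apply: (lie_subalgD S_lie) SZ; apply: lie_subalgZ.
- exists 0; rewrite raddf0 addr0.
  have := lie_subalgZ S_lie c^-1 (lie_subalg_comm S_lie SY SZ).
  by rewrite comm_scale_shift scalerA mulrA mulVf // mul1r.
Qed.

Lemma lie_subalg_comm_of_affine : (forall Y, exists t, S (c *: Y + t%:M)) ->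
  forall A B, S (A *m B - B *m A).
Proof.
move=> S_aff A B; have [t1 SA] := S_aff A; have [t2 SB] := S_aff B.
have := lie_subalgZ S_lie (c * c)^-1 (lie_subalg_comm S_lie SA SB).
by rewrite comm_scale_shift scalerA mulVf ?scale1r // mulf_neq0.
Qed.

End AffineLieSubalgebra.

Section Generators.
Variables (C : fieldType) (n : nat) (q : C).

Lemma u_mx_tridiag (j : 'I_n.-1) :
  u_mx q j = delta_mx j j *m tridiag (b_coef q) (a_coef q).
Proof.
by apply/matrixP => r c; rewrite delta_mulmxE !mxE; case: (r == j); rewrite ?mul1r ?mul0r.
Qed.

Lemma v_mx_tridiag (j : 'I_n.-1) :
  v_mx q j = (1 - n%:R) *: (delta_mx j j *m tridiag (- b_coef q) (- a_coef q)) + 1%:M.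
Proof.
apply/matrixP => r c; rewrite [RHS]mxE [X in X + _]mxE delta_mulmxE !mxE -!(inj_eq val_inj) /=.
by repeat case: eqP => ? /=; rewrite ?(mulr1n, mulr0n); try (exfalso; lia); ring.
Qed.

Lemma mxtrace_v_mx (j : 'I_n.-1) : \tr (v_mx q j) = 0.
Proof.
have n_eq : n%:R = (n.-1)%:R + 1 :> C by rewrite natr1 prednK //; case: n j => [[]|].
by rewrite v_mx_tridiag mxtraceD mxtraceZ mxtrace_delta_mulmx tridiag_diag mxtrace1 n_eq; ring.
Qed.

Hypotheses (q_neq0 : q != 0) (q1_neq0 : 1 + q != 0).

Lemma a_coef_neq0 : a_coef q != 0.
Proof. by rewrite mulf_neq0 ?invr_eq0. Qed.

Lemma b_coef_neq0 : b_coef q != 0.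
Proof. by rewrite mulf_neq0 ?invr_eq0 ?oner_eq0. Qed.

Lemma tridiag_coef_unit m (s : C) : s ^+ 2 = 1 -> q ^+ m.+1 != 1 ->
  @tridiag _ m (s * b_coef q) (s * a_coef q) \in unitmx.
Proof.
move=> s2 qm.
(* The characteristic roots of the recurrence of a kernel vector are [-s] and [-s q]. *)
apply: (@tridiag_unit _ _ _ _ (- s) (- s * q)).
- have -> : s * b_coef q * (- s + - s * q) = - s ^+ 2 by rewrite /b_coef; field.
  by rewrite s2.
- have -> : s * b_coef q * (- s * (- s * q)) = s ^+ 2 * (s * a_coef q).
    by rewrite /a_coef /b_coef; field.
  by rewrite s2 mul1r.
- have s_neq0 : s != 0 by apply: contra_eq_neq s2 => ->; rewrite expr0n eq_sym oner_eq0.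
  rewrite exprMn -{1}[(- s) ^+ _]mulr1; apply: contra qm => /eqP/mulfI <- //.
  by rewrite expf_neq0 ?oppr_eq0.
Qed.

End Generators.

Theorem propositionA5 (R : realType) (n : nat) (q : R[i]) :
  (3 <= n)%N ->
  q != 0 ->
  (forall k : nat, (0 < k)%N -> q ^+ k != 1) ->
  (forall x : 'M[R[i]]_(n.-1),
      lie_gen (fun y => exists j : 'I_(n.-1), y = u_mx q j) x)
  /\
  (forall x : 'M[R[i]]_(n.-1),
      lie_gen (fun y => exists j : 'I_(n.-1), y = v_mx q j) x <-> \tr x = 0).
Proof.
move=> n_ge3 q_neq0 q_not_root.
have q1_neq0 : 1 + q != 0.
  apply: contra_neq (q_not_root 2%N isT) => q1.
  by rewrite (_ : q = -1) ?sqrrN ?expr1n //; apply/eqP; rewrite -addr_eq0 addrC q1.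
have two_neq0 : (2 : R[i]) != 0 by rewrite pnatr_eq0.
have b_neq0 := b_coef_neq0 q1_neq0; have a_neq0 := a_coef_neq0 q_neq0 q1_neq0.
case: n n_ge3 => [|[|[|n]]] // _; have q_pow := q_not_root n.+3 isT.
split=> [x S S_lie S_u | x].
  apply: (lie_subalg_unit_mulmx (W := tridiag (b_coef q) (a_coef q)) two_neq0
    (tridiag_diag _ _) S_lie).
  - by move=> j k /(tridiag_adj_neq0 b_neq0 a_neq0).
  - by rewrite -[b_coef q]mul1r -[a_coef q]mul1r tridiag_coef_unit ?expr1n.
  - by move=> k; rewrite -u_mx_tridiag; apply: S_u; exists k.
split=> [x_gen | tr_x S S_lie S_v].
  by apply: x_gen (lie_subalg_trace0 _ _) _ => _ [j ->]; apply: mxtrace_v_mx.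
have c_neq0 : 1 - n.+3%:R != 0 :> R[i].
  by rewrite -natr1 opprD addrCA subrr addr0 oppr_eq0 pnatr_eq0.
apply: (lie_subalg_contains_trace0 S_lie _ tr_x).
apply: (lie_subalg_comm_of_affine S_lie c_neq0).
apply: (lie_subalg_unit_mulmx (W := tridiag (- b_coef q) (- a_coef q)) two_neq0
  (tridiag_diag _ _) (lie_subalg_affine S_lie c_neq0)).
- by move=> j k; apply: tridiag_adj_neq0; rewrite oppr_eq0.
- by rewrite -[- b_coef q]mulN1r -[- a_coef q]mulN1r tridiag_coef_unit ?sqrrN ?expr1n.
- by move=> k; exists 1; rewrite -v_mx_tridiag; apply: S_v; exists k.
Qed.
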